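(* Let $N$ be a finitely generated, semipositive binoid, $I$ an ideal of $N$ and $J$ an $N_+$-primary ideal of $N$. Then all pointed sets below are finite and $$\#\,N/J+\#\,(I\cap J)/(I+J)=\#\,I/(I+J)+\#\,(N/I)/(J+N/I).$$
   Context: A binoid $(N,+,0,\infty)$ is a commutative monoid $(N,+,0)$ with an element $\infty$ satisfying $a+\infty=\infty$ for all $a\in N$. Write $N^\times$ for the group of units of $N$ and $N_+=N\setminus N^\times$. $N$ is finitely generated if it is finitely generated as a monoid; semipositive if $N\neq\{\infty\}$ and $N^\times$ is finite. An ideal of $N$ is a nonempty subset $I\subseteq N$ with $I+N\subseteq I$ (so $\infty\in I$). An ideal $\mathfrak n$ is $N_+$-primary if $\mathfrak n\subseteq N_+$ and for every $a\in N_+$ there is $k\ge1$ with $ka\in\mathfrak n$. The residue class binoid $N/I$ is $(N\setminus I)\cup\{\infty\}$. An $N$-set is a pointed set $(S,p)$ with a map $N\times S\to S$, $(n,s)\mapsto n+s$, such that $(n+m)+s=n+(m+s)$, $0+s=s$, $\infty+s=p$ and $n+p=p$. $N$, its ideals and $N/I$ are $N$-sets with distinguished point $\infty$. For an ideal $J$ and an $N$-set $T$, $J+T=\{a+t:a\in J,t\in T\}$ is an $N$-subset; for an $N$-subset $S\subseteq T$ (a subset containing $p$ and stable under the action), the quotient $T/S$ is the $N$-set $(T\setminus S)\cup\{p\}$ (with $S$ collapsed to the point). In particular $I+J=\{a+b:a\in I,b\in J\}\subseteq I\cap J$. For a finite pointed set $S$ we write $\#S=|S|-1$. *)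

From Stdlib Require Import List Arith Classical ClassicalEpsilon.
Import ListNotations.

Record binoid := Binoid {
  bcar :> Type;
  badd : bcar -> bcar -> bcar;
  bzero : bcar;
  binf : bcar;
  baddA : forall a b c, badd a (badd b c) = badd (badd a b) c;
  baddC : forall a b, badd a b = badd b a;
  badd0 : forall a, badd bzero a = a;
  baddinf : forall a, badd a binf = binf
}.

Arguments badd {b} _ _ : rename.
Arguments bzero {b} : rename.
Arguments binf {b} : rename.

Section Binoid.
Variable N : binoid.

Fixpoint bmul (k : nat) (a : N) : N :=
  match k with 0 => bzero | S k' => badd a (bmul k' a) end.

Inductive generated (G : N -> Prop) : N -> Prop :=
| gen_zero : generated G bzero
| gen_gen : forall g, G g -> generated G g
| gen_add : forall a b, generated G a -> generated G b -> generated G (badd a b).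

Definition fin_generated : Prop :=
  exists l : list N, forall x : N, generated (fun g => In g l) x.

Definition is_unit (a : N) : Prop := exists b, badd a b = bzero.

Definition finite_set {T : Type} (P : T -> Prop) : Prop :=
  exists l : list T, forall x, P x -> In x l.

Definition semipositive : Prop :=
  (exists x : N, x <> binf) /\ finite_set is_unit.

Definition ideal (I : N -> Prop) : Prop :=
  (exists x, I x) /\ forall a n, I a -> I (badd a n).

Definition primary_ideal (J : N -> Prop) : Prop :=
  ideal J /\ (forall a, J a -> ~ is_unit a) /\
  forall a, ~ is_unit a -> exists k, 1 <= k /\ J (bmul k a).

Definition sumset (I J : N -> Prop) : N -> Prop :=
  fun x => exists a b, I a /\ J b /\ x = badd a b.

(* The residue class binoid N/I = (N \ I) u {oo}, realised as a subset of N,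
   with its N-set action n + t = n + t if n + t is not in I, and oo otherwise. *)
Definition residue (I : N -> Prop) : N -> Prop :=
  fun x => ~ I x \/ x = binf.

Definition residue_act (I : N -> Prop) (n t : N) : N :=
  if excluded_middle_informative (I (badd n t)) then binf else badd n t.

Definition sum_residue (J I : N -> Prop) : N -> Prop :=
  fun x => exists a t, J a /\ residue I t /\ x = residue_act I a t.

End Binoid.

Definition has_card {T : Type} (P : T -> Prop) (n : nat) : Prop :=
  exists l : list T, NoDup l /\ (forall x, P x <-> In x l) /\ length l = n.

(* For a pointed set A (containing the distinguished point) and an N-subset
   S of A (also containing the point), the quotient A/S = (A \ S) u {p};
   hence #(A/S) = |A/S| - 1 is the number of elements of A not in S. *)
Definition quot_card {T : Type} (A S : T -> Prop) (n : nat) : Prop :=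
  has_card (fun x => A x /\ ~ S x) n.

From Stdlib Require Import List Arith Lia Classical ClassicalEpsilon.
Import ListNotations.

(* Every element outside I u J lies in N/I but not in J + N/I, and an element
   of I lies outside I + J exactly when it is outside J or lies in
   (I n J) \ (I + J); so, splitting N \ J along I, both sides of the identity
   count |I \ J| + |N \ (I u J)| + |(I n J) \ (I + J)|.  The content is
   finiteness.  Writing elements as combinations of finitely many generators,
   a non-unit generator g has a multiple k g in J, so the complement of J is
   covered by units plus combinations with bounded coefficients.  By Dickson's
   lemma I is finitely generated as an ideal, I = U_b (b + N), and an element
   b + y outside I + J has y outside J. *)

Definition le_on (D : list nat) (f g : nat -> nat) : Prop :=
  forall i, In i D -> f i <= g i.

Definition upward_closed (D : list nat) (U : (nat -> nat) -> Prop) : Prop :=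
  forall f g, U f -> le_on D f g -> U g.

(* A basis of [S] drawn from [U]: bases of the pieces of a cover of [U] can
   then be concatenated. *)
Definition finite_basis (D : list nat) (U S : (nat -> nat) -> Prop) : Prop :=
  exists B, (forall b, In b B -> U b) /\
            forall f, S f -> exists b, In b B /\ le_on D b f.

Lemma finite_basis_empty D U (S : (nat -> nat) -> Prop) :
  (forall f, ~ S f) -> finite_basis D U S.
Proof.
  intros HS. exists []. split; [intros b []|].
  intros f Hf. now destruct (HS f Hf).
Qed.

Lemma finite_basis_union D U S1 S2 (S : (nat -> nat) -> Prop) :
  finite_basis D U S1 -> finite_basis D U S2 ->
  (forall f, S f -> S1 f \/ S2 f) -> finite_basis D U S.
Proof.
  intros [B1 [HB1 C1]] [B2 [HB2 C2]] HS. exists (B1 ++ B2). split.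
  - intros b Hb. apply in_app_or in Hb as [Hb|Hb]; auto.
  - intros f Hf. destruct (HS f Hf) as [Hf'|Hf'].
    + destruct (C1 f Hf') as [b [Hb Hbf]]. exists b. split; auto using in_or_app.
    + destruct (C2 f Hf') as [b [Hb Hbf]]. exists b. split; auto using in_or_app.
Qed.

Lemma finite_basis_list {X : Type} D U (L : list X)
  (S : X -> (nat -> nat) -> Prop) :
  (forall x, In x L -> finite_basis D U (S x)) ->
  finite_basis D U (fun f => exists x, In x L /\ S x f).
Proof.
  induction L as [|x L IH]; intros HL.
  - apply finite_basis_empty. intros f [x [[] _]].
  - apply finite_basis_union with (S x) (fun f => exists y, In y L /\ S y f).
    + apply HL. now left.
    + apply IH. intros y Hy. apply HL. now right.
    + intros f [y [[<-|Hy] Hf]]; [now left|right; eauto].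
Qed.

Definition upd (f : nat -> nat) (i v : nat) : nat -> nat :=
  fun j => if Nat.eqb j i then v else f j.

(* The slice [f i = v] of [U] is, after forgetting coordinate [i], an
   upward closed set in the remaining coordinates. *)
Lemma finite_basis_slice D U i v :
  upward_closed D U ->
  finite_basis (remove Nat.eq_dec i D) (fun f => U (upd f i v))
    (fun f => U (upd f i v)) ->
  finite_basis D U (fun f => U f /\ f i = v).
Proof.
  intros HU [B [HB CB]]. exists (map (fun b => upd b i v) B). split.
  - intros b Hb. apply in_map_iff in Hb as [b' [<- Hb']]. now apply HB.
  - intros f [Hf Hfi]. destruct (CB f) as [b [Hb Hbf]].
    + apply (HU _ _ Hf). intros j _. unfold upd.
      destruct (Nat.eqb_spec j i); subst; lia.
    + exists (upd b i v). split; [exact (in_map (fun b => upd b i v) B b Hb)|].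
      intros j Hj. unfold upd. destruct (Nat.eqb_spec j i); [subst; lia|].
      apply Hbf. now apply in_in_remove.
Qed.

(* Fix [a] in [U]: an element of [U] is either above [a], or lies in one of
   the finitely many slices [f i = v] with [v < a i]. *)
Lemma dickson D U : upward_closed D U -> finite_basis D U U.
Proof.
  enough (Hn : forall n D U, length D <= n -> upward_closed D U ->
                             finite_basis D U U) by (apply (Hn (length D)); auto).
  clear D U. induction n as [|n IH]; intros D U HD HU;
    (destruct (classic (exists a, U a)) as [[a Ha]|HnU];
     [|apply finite_basis_empty; intros f Hf; apply HnU; eauto]).
  - destruct D; [|simpl in HD; lia].
    exists [a]. split; [intros b [<-|[]]; auto|].
    intros f _. exists a. split; [now left|intros i []].
  - apply finite_basis_union with (le_on D a)
      (fun f => exists i, In i D /\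
                  exists v, In v (seq 0 (a i)) /\ (U f /\ f i = v)).
    + exists [a]. split; [intros b [<-|[]]; auto|].
      intros f Hf. exists a. split; [now left|exact Hf].
    + apply finite_basis_list. intros i Hi.
      apply finite_basis_list. intros v _.
      apply finite_basis_slice; [exact HU|]. apply IH.
      * pose proof (remove_length_lt Nat.eq_dec D i Hi). lia.
      * intros f g Hf Hfg. apply (HU _ _ Hf). intros j Hj. unfold upd.
        destruct (Nat.eqb_spec j i); [lia|]. apply Hfg. now apply in_in_remove.
    + intros f Hf. destruct (classic (le_on D a f)) as [Haf|Haf]; [now left|right].
      apply not_all_ex_not in Haf as [i Hi]. apply imply_to_and in Hi as [HiD Hlt].
      exists i. split; auto. exists (f i). split; [apply in_seq; lia|auto].
Qed.

Lemma finite_set_sub {T : Type} (P Q : T -> Prop) :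
  (forall x, P x -> Q x) -> finite_set Q -> finite_set P.
Proof. intros HPQ [l Hl]. exists l. auto. Qed.

Lemma finite_set_has_card {T : Type} (P : T -> Prop) :
  finite_set P -> exists n, has_card P n.
Proof.
  intros [L HL].
  pose (l := nodup (fun x y : T => excluded_middle_informative (x = y))
               (filter (fun x => if excluded_middle_informative (P x)
                                 then true else false) L)).
  exists (length l), l. split; [apply NoDup_nodup|split; [|reflexivity]].
  intros x. unfold l. rewrite nodup_In, filter_In.
  destruct excluded_middle_informative; split; intros Hx; intuition; discriminate.
Qed.

Lemma has_card_ext {T : Type} (P Q : T -> Prop) n :
  (forall x, P x <-> Q x) -> has_card P n -> has_card Q n.
Proof.
  intros HPQ [l [Hl [HPl Hn]]]. exists l. split; auto. split; auto.
  intros x. now rewrite <- HPQ.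
Qed.

Lemma has_card_partition {T : Type} (P Q R1 R2 : T -> Prop) a b :
  has_card R1 a -> has_card R2 b ->
  (forall x, R1 x <-> P x /\ Q x) -> (forall x, R2 x <-> P x /\ ~ Q x) ->
  has_card P (a + b).
Proof.
  intros [l1 [Hl1 [H1 L1]]] [l2 [Hl2 [H2 L2]]] HR1 HR2.
  exists (l1 ++ l2). split; [|split].
  - apply NoDup_app; auto. intros x Hx1 Hx2.
    apply H1, HR1 in Hx1. apply H2, HR2 in Hx2. tauto.
  - intros x. rewrite in_app_iff, <- H1, <- H2, HR1, HR2. tauto.
  - rewrite length_app. lia.
Qed.

Section Binoid.
Variable N : binoid.

Lemma badd0r (a : N) : badd a bzero = a.
Proof. rewrite baddC. apply badd0. Qed.

Lemma baddCA (a b c : N) : badd a (badd b c) = badd b (badd a c).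
Proof. rewrite !baddA, (baddC N a b). reflexivity. Qed.

Lemma baddACA (a b c d : N) :
  badd (badd a b) (badd c d) = badd (badd a c) (badd b d).
Proof. rewrite <- !baddA, (baddCA b c d). reflexivity. Qed.

Lemma bmulD k m (a : N) : bmul N (k + m) a = badd (bmul N k a) (bmul N m a).
Proof.
  induction k as [|k IH]; simpl.
  - now rewrite badd0.
  - now rewrite IH, baddA.
Qed.

Lemma is_unit0 : is_unit N bzero.
Proof. exists bzero. apply badd0. Qed.

Lemma is_unitD (a b : N) : is_unit N a -> is_unit N b -> is_unit N (badd a b).
Proof.
  intros [a' Ha] [b' Hb]. exists (badd a' b').
  now rewrite baddACA, Ha, Hb, badd0.
Qed.

Lemma is_unit_bmul k (a : N) : is_unit N a -> is_unit N (bmul N k a).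
Proof. intros Ha. induction k; simpl; auto using is_unit0, is_unitD. Qed.

Lemma ideal_addl (I : N -> Prop) a n : ideal N I -> I n -> I (badd a n).
Proof. intros [_ HI] Hn. rewrite baddC. now apply HI. Qed.

Lemma ideal_inf (I : N -> Prop) : ideal N I -> I binf.
Proof.
  intros [[i Hi] HI]. rewrite <- (baddinf N i). now apply HI.
Qed.

Lemma sumset_subr (I J : N -> Prop) x : ideal N J -> sumset N I J x -> J x.
Proof. intros HJ [a [b [_ [Hb ->]]]]. now apply ideal_addl. Qed.

Lemma residue_quotient_iff (I J : N -> Prop) x :
  ideal N I -> ideal N J ->
  (residue N I x /\ ~ sum_residue N J I x) <-> (~ I x /\ ~ J x).
Proof.
  intros HI HJ. split.
  - intros [[HnI | ->] Hns].
    + split; auto. intros HJx. apply Hns. exists x, bzero.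
      split; [exact HJx|split].
      * left. intros HI0. apply HnI. rewrite <- (badd0r x). now apply ideal_addl.
      * unfold residue_act. rewrite badd0r.
        now destruct excluded_middle_informative.
    + exfalso. apply Hns. destruct HJ as [[j Hj] _]. exists j, binf.
      split; [exact Hj|split; [now right|]]. unfold residue_act.
      rewrite baddinf. destruct excluded_middle_informative as [_|Hn]; auto.
  - intros [HnI HnJ]. split; [now left|].
    intros [a [t [Ha [_ Hx]]]]. unfold residue_act in Hx.
    destruct excluded_middle_informative; subst x.
    + exact (HnI (ideal_inf I HI)).
    + exact (HnJ (proj2 HJ a t Ha)).
Qed.

Fixpoint lincomb (l : list N) (f : nat -> nat) : N :=
  match l with
  | [] => bzero
  | g :: l' => badd (bmul N (f 0) g) (lincomb l' (fun i => f (S i)))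
  end.

Lemma lincomb0 l : lincomb l (fun _ => 0) = bzero.
Proof. induction l as [|g l IH]; simpl; auto. now rewrite IH, badd0. Qed.

Lemma lincombD l f h :
  lincomb l (fun i => f i + h i) = badd (lincomb l f) (lincomb l h).
Proof.
  revert f h. induction l as [|g l IH]; intros f h; simpl.
  - now rewrite badd0.
  - now rewrite bmulD, IH, baddACA.
Qed.

Lemma eq_lincomb l f h :
  (forall i, i < length l -> f i = h i) -> lincomb l f = lincomb l h.
Proof.
  revert f h. induction l as [|g l IH]; intros f h Hfh; simpl; auto.
  rewrite (Hfh 0) by (simpl; lia). f_equal.
  apply IH. intros i Hi. apply Hfh. simpl; lia.
Qed.

Lemma lincomb_split l f h : (forall i, i < length l -> f i <= h i) ->
  lincomb l h = badd (lincomb l f) (lincomb l (fun i => h i - f i)).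
Proof.
  intros Hfh. rewrite <- lincombD. apply eq_lincomb.
  intros i Hi. specialize (Hfh i Hi). lia.
Qed.

Lemma lincomb_In l g : In g l -> exists f, g = lincomb l f.
Proof.
  induction l as [|a l IH]; simpl; [contradiction|intros [<-|Hg]].
  - exists (fun i => match i with 0 => 1 | S _ => 0 end).
    simpl. now rewrite lincomb0, !badd0r.
  - destruct (IH Hg) as [f Hf].
    exists (fun i => match i with 0 => 0 | S j => f j end).
    simpl. now rewrite badd0.
Qed.

Lemma generated_lincomb l x :
  generated N (fun g => In g l) x -> exists f, x = lincomb l f.
Proof.
  induction 1 as [|g Hg|a b _ [f ->] _ [h ->]].
  - exists (fun _ => 0). now rewrite lincomb0.
  - now apply lincomb_In.
  - exists (fun i => f i + h i). now rewrite lincombD.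
Qed.

Fixpoint bounded_lincombs (M : nat) (l : list N) : list N :=
  match l with
  | [] => [bzero]
  | g :: l' =>
      flat_map (fun y => map (fun k => badd (bmul N k g) y) (seq 0 (S M)))
        (bounded_lincombs M l')
  end.

Lemma bounded_lincombs_cons M g l k y :
  k <= M -> In y (bounded_lincombs M l) ->
  In (badd (bmul N k g) y) (bounded_lincombs M (g :: l)).
Proof.
  intros Hk Hy. apply in_flat_map. exists y. split; auto.
  apply in_map_iff. exists k. split; auto. apply in_seq. lia.
Qed.

(* Multiples of a unit generator are absorbed into the unit part; multiples
   of a non-unit generator stay below the bound M, since otherwise they lie
   in J. *)
Lemma lincomb_notin_ideal (J : N -> Prop) M l : ideal N J ->
  (forall g, In g l -> ~ is_unit N g -> exists k, k <= M /\ J (bmul N k g)) ->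
  forall f, ~ J (lincomb l f) ->
  exists u y, is_unit N u /\ In y (bounded_lincombs M l) /\
              lincomb l f = badd u y.
Proof.
  intros HJ. induction l as [|g l IH]; intros Hbound f Hf.
  { exists bzero, bzero. split; [apply is_unit0|split; [now left|]].
    simpl. now rewrite badd0. }
  simpl in Hf |- *.
  set (y0 := lincomb l (fun i => f (S i))) in *.
  destruct (IH (fun h Hh => Hbound h (or_intror Hh)) (fun i => f (S i)))
    as [u [y [Hu [Hy Hy0]]]].
  { intros HJy0. apply Hf. now apply ideal_addl. }
  fold y0 in Hy0. rewrite Hy0.
  destruct (classic (is_unit N g)) as [Hg|Hg].
  - exists (badd (bmul N (f 0) g) u), y.
    split; [apply is_unitD; [now apply is_unit_bmul|exact Hu]|split].
    + rewrite <- (badd0 N y).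
      apply (bounded_lincombs_cons M g l 0); [lia|exact Hy].
    + apply baddA.
  - destruct (Hbound g (or_introl eq_refl) Hg) as [k [HkM Hk]].
    assert (Hfk : f 0 < k).
    { destruct (le_lt_dec k (f 0)) as [Hkf|]; auto. exfalso. apply Hf.
      replace (f 0) with (k + (f 0 - k)) by lia.
      rewrite bmulD. now apply HJ, HJ. }
    exists u, (badd (bmul N (f 0) g) y). split; [exact Hu|split].
    + apply bounded_lincombs_cons; [lia|exact Hy].
    + apply baddCA.
Qed.

Section PrimaryIdeal.
Variable J : N -> Prop.
Hypothesis HJ : primary_ideal N J.

Lemma primary_ideal_bmul_bound (l : list N) : exists M, forall g,
  In g l -> ~ is_unit N g -> exists k, k <= M /\ J (bmul N k g).
Proof.
  destruct HJ as [_ [_ HJk]]. induction l as [|a l [M HM]].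
  - exists 0. intros g [].
  - destruct (classic (is_unit N a)) as [Ha|Ha].
    + exists M. intros g [<-|Hg] Hn; [contradiction|auto].
    + destruct (HJk a Ha) as [k [_ Hka]]. exists (k + M).
      intros g [<-|Hg] Hn.
      * exists k. split; [lia|auto].
      * destruct (HM g Hg Hn) as [k' [? ?]]. exists k'. split; [lia|auto].
Qed.

Lemma primary_ideal_cofinite :
  fin_generated N -> finite_set (is_unit N) -> finite_set (fun x => ~ J x).
Proof.
  intros [l Hl] [LU HLU].
  destruct (primary_ideal_bmul_bound l) as [M HM].
  exists (flat_map (fun u => map (badd u) (bounded_lincombs M l)) LU).
  intros x Hx. destruct (generated_lincomb l x (Hl x)) as [f ->].
  destruct (lincomb_notin_ideal J M l (proj1 HJ) HM f Hx) as [u [y [Hu [Hy ->]]]].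
  apply in_flat_map. exists u. split; auto using in_map.
Qed.

End PrimaryIdeal.

Lemma ideal_finitely_generated (I : N -> Prop) :
  fin_generated N -> ideal N I ->
  exists B, (forall b, In b B -> I b) /\
            forall x, I x -> exists b y, In b B /\ x = badd b y.
Proof.
  intros [l Hl] HI.
  set (D := seq 0 (length l)).
  assert (Hle : forall f h, le_on D f h -> forall i, i < length l -> f i <= h i).
  { intros f h Hfh i Hi. apply Hfh. unfold D. apply in_seq. lia. }
  destruct (dickson D (fun f => I (lincomb l f))) as [Bf [HBf CBf]].
  { intros f h Hf Hfh. rewrite (lincomb_split l f h (Hle f h Hfh)).
    now apply HI. }
  exists (map (lincomb l) Bf). split.
  - intros b Hb. apply in_map_iff in Hb as [f [<- Hf]]. now apply HBf.
  - intros x Hx. destruct (generated_lincomb l x (Hl x)) as [h ->].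
    destruct (CBf h Hx) as [f [Hf Hfh]].
    exists (lincomb l f), (lincomb l (fun i => h i - f i)).
    split; [now apply in_map|]. apply lincomb_split. now apply Hle.
Qed.

Lemma ideal_sumset_cofinite (I J : N -> Prop) :
  fin_generated N -> ideal N I -> finite_set (fun x => ~ J x) ->
  finite_set (fun x => I x /\ ~ sumset N I J x).
Proof.
  intros Hfg HI [L HL].
  destruct (ideal_finitely_generated I Hfg HI) as [B [HB CB]].
  exists (flat_map (fun b => map (badd b) L) B).
  intros x [Hx Hns]. destruct (CB x Hx) as [b [y [Hb ->]]].
  apply in_flat_map. exists b. split; auto. apply in_map, HL.
  intros Hy. apply Hns. exists b, y. auto.
Qed.

End Binoid.

Theorem mainTheorem15 (N : binoid) (I J : N -> Prop) :
  fin_generated N -> semipositive N ->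
  ideal N I -> primary_ideal N J ->
  exists n1 n2 n3 n4 : nat,
    (* # N/J *)
    quot_card (fun _ : N => True) J n1 /\
    (* # (I cap J)/(I + J) *)
    quot_card (fun x => I x /\ J x) (sumset N I J) n2 /\
    (* # I/(I + J) *)
    quot_card I (sumset N I J) n3 /\
    (* # (N/I)/(J + N/I) *)
    quot_card (residue N I) (sum_residue N J I) n4 /\
    n1 + n2 = n3 + n4.
Proof.
  intros Hfg [_ Hunits] HI HJ.
  pose proof (primary_ideal_cofinite N J HJ Hfg Hunits) as HcoJ.
  pose proof (ideal_sumset_cofinite N I J Hfg HI HcoJ) as HcoIJ.
  destruct (finite_set_has_card (fun x => I x /\ ~ J x)) as [p Hp].
  { exact (finite_set_sub _ _ (fun x Hx => proj2 Hx) HcoJ). }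
  destruct (finite_set_has_card (fun x => ~ I x /\ ~ J x)) as [q Hq].
  { exact (finite_set_sub _ _ (fun x Hx => proj2 Hx) HcoJ). }
  destruct (finite_set_has_card (fun x => (I x /\ J x) /\ ~ sumset N I J x))
    as [r Hr].
  { exact (finite_set_sub _ _ (fun x Hx => conj (proj1 (proj1 Hx)) (proj2 Hx)) HcoIJ). }
  exists (p + q), r, (r + p), q. split; [|split; [exact Hr|split; [|split]]].
  - apply (has_card_partition _ I _ _ _ _ Hp Hq); intros x; tauto.
  - apply (has_card_partition _ J _ _ _ _ Hr Hp); intros x;
      pose proof (sumset_subr N I J x (proj1 HJ)); tauto.
  - apply (has_card_ext (fun x => ~ I x /\ ~ J x)); [|exact Hq].
    intros x. symmetry. exact (residue_quotient_iff N I J x HI (proj1 HJ)).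
  - lia.
Qed.
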